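(* Let $F$ attain its minimum $F^*$ at some $x^*\in\operatorname{dom}h$. Let $x_0\in\mathbb{E}$, let $(a_k)_{k\ge1}$ be positive numbers and $(\delta_k)_{k\ge1}$ nonnegative numbers. Suppose that for each $k\ge0$, points $x_{k+1}$ and vectors $g_{k+1}\in\partial\Phi_{k+1}(x_{k+1})$ are given, where $\Phi_{k+1}(x)=a_{k+1}F(x)+\frac12\|x-x_k\|^2$, such that $\|g_{k+1}\|_*\le\delta_{k+1}$, and set $F'(x_{k+1})=\frac1{a_{k+1}}\big(g_{k+1}-B(x_{k+1}-x_k)\big)\in\partial F(x_{k+1})$. Then for every $k\ge1$, $$\sum_{i=1}^ka_i(F(x_i)-F^* )+\frac12\sum_{i=1}^ka_i^2\|F'(x_i)\|_*^2+\frac12\|x_k-x^*\|^2\le\frac12\Big(\|x_0-x^*\|+\sum_{i=1}^k\delta_i\Big)^2.$$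
   Context: $\mathbb{E}$ is a finite-dimensional real vector space with dual $\mathbb{E}^*$; $B:\mathbb{E}\to\mathbb{E}^*$ is a fixed self-adjoint positive-definite operator, $\|x\|=\langle Bx,x\rangle^{1/2}$, $\|g\|_*=\langle g,B^{-1}g\rangle^{1/2}$. $F=f+h$, where $h:\mathbb{E}\to\mathbb{R}\cup\{+\infty\}$ is proper closed convex and $f$ is convex and $p$ times differentiable ($p\ge2$) on an open convex set containing $\operatorname{dom}h$ with Lipschitz continuous $p$-th derivative on $\operatorname{dom}h$. $\partial$ denotes the convex subdifferential. *)

From HB Require Import structures.
From mathcomp Require Import all_boot all_order all_algebra.
From mathcomp Require Import mathcomp_extra boolp classical_sets reals constructive_ereal ereal topology normedtype sequences.
Set Implicit Arguments. Unset Strict Implicit. Unset Printing Implicit Defensive.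
Import Order.TTheory GRing.Theory Num.Theory.
Import numFieldNormedType.Exports.
Local Open Scope ring_scope.
Local Open Scope classical_set_scope.

(* The space E is modelled as column vectors 'cV[R]_n; its dual E^* is also
   'cV[R]_n, with the duality pairing <g, x> = g^T x. *)
Section Defs.
Variables (R : realType) (n : nat).
Local Notation E := 'cV[R]_n.

Definition pair (g x : E) : R := (g^T *m x) ord0 ord0.

Definition self_adjoint_posdef (B : 'M[R]_n) : Prop :=
  B^T = B /\ forall x : E, x != 0 -> 0 < pair (B *m x) x.

Definition normE (B : 'M[R]_n) (x : E) : R := Num.sqrt (pair (B *m x) x).
Definition dnormE (B : 'M[R]_n) (g : E) : R := Num.sqrt (pair g (invmx B *m g)).

(* convergence of a sequence of vectors (coordinatewise = in any norm) *)
Definition vcvg (u : nat -> E) (y : E) : Prop :=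
  forall i : 'I_n, (fun k => u k i ord0) @ \oo --> y i ord0.

Definition vopen (U : set E) : Prop :=
  forall y, U y -> exists2 e : R, 0 < e &
    forall z : E, (forall i : 'I_n, `|z i ord0 - y i ord0| < e) -> U z.

Definition convex_set (U : set E) : Prop :=
  forall (y z : E) (t : R), U y -> U z -> 0 <= t <= 1 -> U (t *: y + (1 - t) *: z).

Definition convex_efun (h : E -> \bar R) : Prop :=
  forall (y z : E) (t : R), 0 <= t <= 1 ->
    (h (t *: y + (1 - t) *: z)%R <= t%:E * h y + (1 - t)%R%:E * h z)%E.

Definition proper_fun (h : E -> \bar R) : Prop :=
  (forall y, h y != -oo%E) /\ exists y, (h y < +oo)%E.

(* closed = lower semicontinuous = closed epigraph (sequential form) *)
Definition closed_fun (h : E -> \bar R) : Prop :=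
  forall (u : nat -> E) (y : E) (s : nat -> R) (t : R),
    vcvg u y -> s @ \oo --> t ->
    (forall k, (h (u k) <= (s k)%:E)%E) -> (h y <= t%:E)%E.

Definition dom (h : E -> \bar R) : set E := [set y | (h y < +oo)%E].

Definition convex_on (U : set E) (f : E -> R) : Prop :=
  forall (y z : E) (t : R), U y -> U z -> 0 <= t <= 1 ->
    f (t *: y + (1 - t) *: z) <= t * f y + (1 - t) * f z.

Definition subdiff (F : E -> \bar R) (y g : E) : Prop :=
  (F y < +oo)%E /\ forall z, (F y + (pair g (z - y)%R)%:E <= F z)%E.

End Defs.

From HB Require Import structures.
From mathcomp Require Import all_boot all_order all_algebra.
From mathcomp Require Import mathcomp_extra boolp classical_sets reals constructive_ereal ereal topology normedtype sequences.
From mathcomp Require Import ring lra.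
Set Implicit Arguments. Unset Strict Implicit. Unset Printing Implicit Defensive.
Import Order.TTheory GRing.Theory Num.Theory.
Import numFieldNormedType.Exports.
Local Open Scope ring_scope.
Local Open Scope classical_set_scope.

(* Each proximal step is a subgradient step in disguise: a_(k+1) F'(x_(k+1)) =
   g_(k+1) - B (x_(k+1) - x_k) is a subgradient of a_(k+1) F at x_(k+1).  The subgradient
   inequality at x*, after completing the square, gives the one-step bound
     a (F(x_(k+1)) - F* ) + a^2 |F'(x_(k+1))|_*^2 / 2 + |x_(k+1) - x*|^2 / 2
       <= (|x_k - x*| + |g_(k+1)|_* )^2 / 2 <= (|x_k - x*| + delta_(k+1))^2 / 2.
   All terms on the left are nonnegative, so |x_k - x*| <= |x_0 - x*| + sum delta_i, which
   lets the one-step bounds be summed into the claim. *)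

Lemma le0_of_le_small_mul (R : realFieldType) (K C : R) :
  (forall t, 0 < t <= 1 -> K <= t * C) -> K <= 0.
Proof.
move=> HK; rewrite leNgt; apply/negP => K0.
have s0 : 0 < K + `|C| + 1 by rewrite -addrA ltr_wpDr ?ltr_pwDr.
have t0 : 0 < K / (K + `|C| + 1) by rewrite divr_gt0.
have t1 : K / (K + `|C| + 1) <= 1 by rewrite ler_pdivrMr // mul1r -addrA lerDl.
have := HK _ (introT andP (conj t0 t1)).
rewrite -(ler_pM2r s0) mulrAC divfK ?gt_eqF // => le_K.
have := ler_norm C; nra.
Qed.

Section Pairing.
Variables (R : realType) (n : nat).
Local Notation E := 'cV[R]_n.

Lemma pairE (g x : E) : pair g x = \sum_j g j ord0 * x j ord0.
Proof. by rewrite /pair !mxE; apply: eq_bigr => j _; rewrite mxE. Qed.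

Lemma pairDl (g1 g2 x : E) : pair (g1 + g2) x = pair g1 x + pair g2 x.
Proof. by rewrite !pairE -big_split; apply: eq_bigr => j _; rewrite mxE mulrDl. Qed.

Lemma pairZl c (g x : E) : pair (c *: g) x = c * pair g x.
Proof. by rewrite !pairE mulr_sumr; apply: eq_bigr => j _; rewrite mxE mulrA. Qed.

Lemma pairC (g x : E) : pair g x = pair x g.
Proof. by rewrite !pairE; apply: eq_bigr => j _; rewrite mulrC. Qed.

Lemma pairNl (g x : E) : pair (- g) x = - pair g x.
Proof. by rewrite -scaleN1r pairZl mulN1r. Qed.

Lemma pairBl (g1 g2 x : E) : pair (g1 - g2) x = pair g1 x - pair g2 x.
Proof. by rewrite pairDl pairNl. Qed.

Lemma pairDr (g x1 x2 : E) : pair g (x1 + x2) = pair g x1 + pair g x2.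
Proof. by rewrite ![pair g _]pairC pairDl. Qed.

Lemma pairZr c (g x : E) : pair g (c *: x) = c * pair g x.
Proof. by rewrite ![pair g _]pairC pairZl. Qed.

Lemma pairNr (g x : E) : pair g (- x) = - pair g x.
Proof. by rewrite ![pair g _]pairC pairNl. Qed.

Lemma pair0r (g : E) : pair g 0 = 0.
Proof. by rewrite -(scale0r 0) pairZr mul0r. Qed.

Lemma pair_mulmx (A : 'M[R]_n) (u v : E) : pair (A *m u) v = pair u (A^T *m v).
Proof. by rewrite /pair trmx_mul mulmxA. Qed.

End Pairing.

Section PosDefGeometry.
Variables (R : realType) (n : nat) (B : 'M[R]_n).
Hypothesis posdefB : self_adjoint_posdef B.
Local Notation E := 'cV[R]_n.

Lemma pairB_sym (u v : E) : pair (B *m u) v = pair (B *m v) u.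
Proof. by rewrite pair_mulmx (proj1 posdefB) pairC. Qed.

Lemma pairB_ge0 (u : E) : 0 <= pair (B *m u) u.
Proof.
have [->|u0] := eqVneq u 0; first by rewrite mulmx0 pair0r.
exact/ltW/(proj2 posdefB).
Qed.

Lemma unitmx_posdef : B \in unitmx.
Proof.
rewrite unitmxE unitfE; apply/negP => /det0P [v v0 vB].
have Bv : B *m v^T = 0 by rewrite -[B](proj1 posdefB) -trmx_mul vB trmx0.
have := proj2 posdefB v^T; rewrite Bv pairC pair0r ltxx -trmx0.
by rewrite (inj_eq (@trmx_inj _ _ _)) v0 => /(_ isT).
Qed.

Lemma normE_sqr (u : E) : normE B u ^+ 2 = pair (B *m u) u.
Proof. by rewrite sqr_sqrtr // pairB_ge0. Qed.

Lemma normE_ge0 (u : E) : 0 <= normE B u.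
Proof. exact: sqrtr_ge0. Qed.

Lemma dnormE_ge0 (g : E) : 0 <= dnormE B g.
Proof. exact: sqrtr_ge0. Qed.

Lemma normEZ c (u : E) : normE B (c *: u) = `|c| * normE B u.
Proof.
by rewrite /normE -scalemxAr pairZl pairZr mulrA -expr2 sqrtrM ?sqr_ge0 // sqrtr_sqr.
Qed.

Lemma normE_sqrD (u v : E) :
  normE B (u + v) ^+ 2 = normE B u ^+ 2 + 2 * pair (B *m u) v + normE B v ^+ 2.
Proof.
rewrite !normE_sqr mulmxDr !pairDl !pairDr (pairB_sym v u); ring.
Qed.

Lemma pairB_eq0 (u : E) : pair (B *m u) u = 0 -> u = 0.
Proof.
move=> qu0; apply/eqP; apply: contraT => u0.
by have := proj2 posdefB u u0; rewrite qu0 ltxx.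
Qed.

(* Cauchy-Schwarz, from |u - t v|^2 >= 0 at the minimizing t = <Bu, v> / |v|^2. *)
Lemma pairB_le_mul_normE (u v : E) : pair (B *m u) v <= normE B u * normE B v.
Proof.
have [qv0|qv_neq0] := eqVneq (pair (B *m v) v) 0.
  by rewrite (pairB_eq0 qv0) pair0r mulr_ge0 ?normE_ge0.
have qv_gt0 : 0 < pair (B *m v) v by rewrite lt_def qv_neq0 pairB_ge0.
suff b2 : pair (B *m u) v ^+ 2 <= normE B u ^+ 2 * normE B v ^+ 2.
  apply: le_trans (ler_norm _) _; rewrite -exprMn in b2.
  by rewrite -ler_sqr ?nnegrE ?mulr_ge0 ?normE_ge0 // real_normK ?num_real.
set b := pair (B *m u) v; set t := b / pair (B *m v) v.
have := pairB_ge0 (u - t *: v).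
rewrite mulmxBr -scalemxAr pairBl !pairDr !pairNr !pairZr !pairZl (pairB_sym v u) -/b.
rewrite !normE_sqr => q_ge0.
have tq : t * pair (B *m v) v = b by rewrite divfK.
nra.
Qed.

Lemma ler_normED (u v : E) : normE B (u + v) <= normE B u + normE B v.
Proof.
rewrite -(@ler_pXn2r _ 2) ?nnegrE ?addr_ge0 ?normE_ge0 //.
rewrite normE_sqrD sqrrD lerD2r lerD2l; have := pairB_le_mul_normE u v; lra.
Qed.

Lemma dnormE_normE (g : E) : dnormE B g = normE B (invmx B *m g).
Proof. by rewrite /normE mulKVmx // unitmx_posdef. Qed.

Lemma dnormEZ c (g : E) : dnormE B (c *: g) = `|c| * dnormE B g.
Proof. by rewrite !dnormE_normE -scalemxAr normEZ. Qed.

(* With v = B^-1 g the left side is at most |v + (xk - xs)|^2 / 2, by completing the square. *)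
Lemma prox_step_bound (c : R) (g xk x' xs : E) :
  c <= pair (g - B *m (x' - xk)) (x' - xs) ->
  c + 2^-1 * dnormE B (g - B *m (x' - xk)) ^+ 2 + 2^-1 * normE B (x' - xs) ^+ 2
    <= 2^-1 * (normE B (xk - xs) + dnormE B g) ^+ 2.
Proof.
rewrite !dnormE_normE; set v := invmx B *m g.
have -> : invmx B *m (g - B *m (x' - xk)) = v - (x' - xk).
  by rewrite mulmxBr mulKmx // unitmx_posdef.
have -> : g - B *m (x' - xk) = B *m (v - (x' - xk)).
  by rewrite [RHS]mulmxBr /v mulKVmx // unitmx_posdef.
have -> : xk - xs = (v - (x' - xk)) + (x' - xs) - v.
  by rewrite [RHS]addrAC [v - _ - v]addrAC subrr add0r opprB addrA subrK.
set w := v - (x' - xk); set r := x' - xs => le_c.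
have := normE_sqrD w r.
have : normE B (w + r) ^+ 2 <= (normE B (w + r - v) + normE B v) ^+ 2.
  by rewrite ler_sqr ?nnegrE ?addr_ge0 ?normE_ge0 // -{1}(subrK v (w + r)) ler_normED.
lra.
Qed.

End PosDefGeometry.

Lemma convex_comb_subr (R : realType) (n : nat) (t : R) (y z : 'cV[R]_n) :
  t *: y + (1 - t) *: z - z = t *: (y - z).
Proof. by apply/matrixP => i j; rewrite !mxE; ring. Qed.

Section ProximalStep.
Variables (R : realType) (n : nat) (B : 'M[R]_n).
Local Notation E := 'cV[R]_n.
Variables (f : E -> R) (h : E -> \bar R) (U : set E).
Hypotheses (posdefB : self_adjoint_posdef B) (proper_h : proper_fun h)
  (convex_h : convex_efun h) (domh_U : dom h `<=` U) (convex_f : convex_on U f).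

Local Notation F y := ((f y)%:E + h y)%E.
Local Notation Fr y := (f y + fine (h y)).
Local Notation Phi a xk :=
  (fun y => (a%:E * F y + (2^-1 * normE B (y - xk) ^+ 2)%:E)%E).

Lemma h_fin y : dom h y -> h y = (fine (h y))%:E.
Proof. by move=> hy; rewrite fineK // fin_numE (proj1 proper_h y) lt_eqF. Qed.

Lemma F_fin y : dom h y -> F y = (Fr y)%:E.
Proof. by move=> hy; rewrite {1}(h_fin hy) EFinD. Qed.

Lemma dom_convex y z t :
  dom h y -> dom h z -> 0 <= t <= 1 -> dom h (t *: y + (1 - t) *: z).
Proof.
move=> hy hz t01; apply: le_lt_trans (convex_h y z t01) _.
by rewrite (h_fin hy) (h_fin hz) -!EFinM -EFinD ltry.
Qed.

Lemma Fr_convex y z t : dom h y -> dom h z -> 0 <= t <= 1 ->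
  Fr (t *: y + (1 - t) *: z) <= t * Fr y + (1 - t) * Fr z.
Proof.
move=> hy hz t01.
have := convex_h y z t01; rewrite (h_fin hy) (h_fin hz) (h_fin (dom_convex hy hz t01)).
rewrite -!EFinM -EFinD lee_fin => le_h.
have := convex_f (domh_U hy) (domh_U hz) t01; lra.
Qed.

Lemma dom_prox (a : R) (xk x' g : E) :
  0 < a -> subdiff (Phi a xk) x' g -> dom h x'.
Proof.
move=> a_gt0 [Phi_fin _]; change (h x' < +oo)%E.
move: Phi_fin (proj1 proper_h x'); case: (h x') => [r _ _| |//]; first exact: ltry.
by rewrite addey // gt0_muley ?lte_fin // addye // ltxx.
Qed.

(* Compare the prox objective at x' and at x' + t (z - x'): the quadratic term only
   contributes at order t^2, so letting t -> 0 leaves the subgradient inequality. *)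
Lemma prox_subgradient (a : R) (xk x' g : E) : 0 < a -> subdiff (Phi a xk) x' g ->
  subdiff (fun y => F y) x' (a^-1 *: (g - B *m (x' - xk))).
Proof.
move=> a_gt0 sub; have dom_x' := dom_prox a_gt0 sub.
split=> [|z]; first by rewrite (F_fin dom_x') ltry.
have [dom_z|ndom_z] := pselect (dom h z); last first.
  have -> : h z = +oo%E.
    move: ndom_z (proj1 proper_h z); change (dom h z) with (is_true (h z < +oo)%E).
    by case: (h z) => // r /(_ (ltry r)).
  by rewrite addey // leey.
rewrite (F_fin dom_x') (F_fin dom_z) -EFinD lee_fin pairZl.
rewrite -(ler_pM2l a_gt0) mulrDr mulrA mulfV ?gt_eqF // mul1r -lerBrDl -mulrBr.
set u := x' - xk; set d := z - x'.
rewrite -subr_le0; apply: (@le0_of_le_small_mul _ _ (2^-1 * normE B d ^+ 2)).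
move=> t /andP[t_gt0 t_le1]; have t01 : 0 <= t <= 1 by rewrite ltW.
set zt := t *: z + (1 - t) *: x'.
have dom_zt := dom_convex dom_z dom_x' t01.
have zt_x' : zt - x' = t *: d := convex_comb_subr t z x'.
have zt_xk : zt - xk = u + t *: d by rewrite -zt_x' [RHS]addrC addrA subrK.
have := proj2 sub zt; rewrite (F_fin dom_x') (F_fin dom_zt) -!EFinM -!EFinD lee_fin.
rewrite zt_x' zt_xk -/u (normE_sqrD posdefB u) normEZ (ger0_norm (ltW t_gt0)) !pairZr.
have := ler_wpM2l (ltW a_gt0) (Fr_convex dom_z dom_x' t01); rewrite -/zt.
move=> aFr_zt Phi_le; rewrite -(ler_pM2l t_gt0) pairBl; lra.
Qed.

Lemma prox_step (a : R) (xk x' g xs : E) :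
  0 < a -> subdiff (Phi a xk) x' g -> dom h xs ->
  a * (Fr x' - Fr xs) + 2^-1 * (a ^+ 2 * dnormE B (a^-1 *: (g - B *m (x' - xk))) ^+ 2)
    + 2^-1 * normE B (x' - xs) ^+ 2
  <= 2^-1 * (normE B (xk - xs) + dnormE B g) ^+ 2.
Proof.
move=> a_gt0 sub dom_xs.
rewrite (dnormEZ posdefB) exprMn [a ^+ 2 * _]mulrA -exprMn gtr0_norm ?invr_gt0 //.
rewrite mulfV ?gt_eqF // expr1n mul1r; apply: (prox_step_bound posdefB).
have [_ /(_ xs)] := prox_subgradient a_gt0 sub.
rewrite (F_fin (dom_prox a_gt0 sub)) (F_fin dom_xs) -EFinD lee_fin pairZl.
rewrite -[xs - x']opprB pairNr => /(ler_wpM2l (ltW a_gt0)).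
rewrite mulrDr mulrA mulfV ?gt_eqF // mul1r; lra.
Qed.

End ProximalStep.

Lemma sum_le_sqr_of_step (R : realFieldType) (c r d : nat -> R) :
  (forall i, 0 <= c i.+1) -> (forall i, 0 <= r i) -> (forall i, 0 <= d i.+1) ->
  (forall i, c i.+1 + 2^-1 * r i.+1 ^+ 2 <= 2^-1 * (r i + d i.+1) ^+ 2) ->
  forall k, \sum_(1 <= i < k.+1) c i + 2^-1 * r k ^+ 2
            <= 2^-1 * (r 0%N + \sum_(1 <= i < k.+1) d i) ^+ 2.
Proof.
move=> c_ge0 r_ge0 d_ge0 step; elim=> [|k IH]; first by rewrite !big_geq // add0r addr0.
rewrite !big_add1 !big_nat_recr //= in IH *.
have S_ge0 : 0 <= \sum_(0 <= i < k) c i.+1 by apply: sumr_ge0.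
have D_ge0 : 0 <= \sum_(0 <= i < k) d i.+1 by apply: sumr_ge0.
have r_le : r k <= r 0%N + \sum_(0 <= i < k) d i.+1.
  by rewrite -ler_sqr ?nnegrE ?addr_ge0 //; lra.
have := ler_wpM2r (d_ge0 k) r_le; have := step k; rewrite !sqrrD; lra.
Qed.

Theorem theorem5 (R : realType) (n : nat) (B : 'M[R]_n)
  (f : 'cV[R]_n -> R) (h : 'cV[R]_n -> \bar R) (U : set 'cV[R]_n)
  (xstar x0 : 'cV[R]_n) (x g : nat -> 'cV[R]_n) (a delta : nat -> R) :
  self_adjoint_posdef B ->
  proper_fun h -> convex_efun h -> closed_fun h ->
  vopen U -> convex_set U -> dom h `<=` U -> convex_on U f ->
  let F := fun y => ((f y)%:E + h y)%E in
  dom h xstar -> (forall y, (F xstar <= F y)%E) ->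
  x 0%N = x0 ->
  (forall k, 0 < a k.+1) -> (forall k, 0 <= delta k.+1) ->
  (forall k, subdiff
     (fun y => ((a k.+1)%:E * F y + (2^-1 * normE B (y - x k)%R ^+ 2)%R%:E)%E)
     (x k.+1) (g k.+1)) ->
  (forall k, dnormE B (g k.+1) <= delta k.+1) ->
  let F' := fun i => (a i)^-1 *: (g i - B *m (x i - x i.-1)) in
  forall k, (1 <= k)%N ->
    ((\sum_(1 <= i < k.+1) (a i)%:E * (F (x i) - F xstar))
     + (2^-1 * \sum_(1 <= i < k.+1) (a i ^+ 2 * dnormE B (F' i) ^+ 2))%:E
     + (2^-1 * normE B (x k - xstar) ^+ 2)%:E
     <= (2^-1 * (normE B (x0 - xstar) + \sum_(1 <= i < k.+1) delta i) ^+ 2)%:E)%E.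
Proof.
move=> posdefB proper_h convex_h _ _ _ domh_U convex_f F dom_xs F_min x_0 a_gt0
  delta_ge0 sub g_le F' k _.
pose Fr y := f y + fine (h y).
have dom_x i : dom h (x i.+1) := dom_prox proper_h (a_gt0 i) (sub i).
have FE y : dom h y -> F y = (Fr y)%:E := @F_fin _ _ f h proper_h y.
have Fr_min i : Fr xstar <= Fr (x i.+1).
  by have := F_min (x i.+1); rewrite (FE _ dom_xs) (FE _ (dom_x i)).
have -> : (\sum_(1 <= i < k.+1) (a i)%:E * (F (x i) - F xstar) =
    (\sum_(1 <= i < k.+1) a i * (Fr (x i) - Fr xstar))%:E)%E.
  rewrite -sumEFin; apply: eq_big_nat => -[|i] // _.
  by rewrite (FE _ dom_xs) (FE _ (dom_x i)) -EFinB -EFinM.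
rewrite -!EFinD lee_fin mulr_sumr -big_split /= -x_0.
apply: (sum_le_sqr_of_step (r := fun i => normE B (x i - xstar))) => [i|i|//|i].
- apply: addr_ge0; first by rewrite mulr_ge0 ?subr_ge0 ?Fr_min ?(ltW (a_gt0 i)).
  by rewrite mulr_ge0 ?invr_ge0 ?ler0n // mulr_ge0 ?sqr_ge0.
- exact: normE_ge0.
- have := prox_step posdefB proper_h convex_h domh_U convex_f (a_gt0 i) (sub i) dom_xs.
  move/le_trans; apply.
  by rewrite ler_pM2l ?invr_gt0 // ler_sqr ?nnegrE ?addr_ge0 ?normE_ge0 ?dnormE_ge0 ?lerD2l ?g_le.
Qed.
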